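(* Let $\alpha>0$, $\varepsilon>0$, and let $K$ be the set of all items that are ever added to the tentative solution $I$ during Phase A and Phase B (including items that are later removed by an exchange). Then \[ \mathbb E[w(K\setminus D)]\ \ge\ (1-\varepsilon)\,\mathbb E[w(K)], \] where the expectation is over the random sampling in Phase A.
   Context: Setting. $V$ is a finite ground set of $n=|V|$ items arriving one at a time in a fixed stream order. $f:2^V\to\mathbb R_{\ge 0}$ is non-decreasing and submodular with $f(\emptyset)=0$; write $f(v\mid X)=f(X\cup\{v\})-f(X)$. $\mathcal M=\mathcal M_1\cap\dots\cap\mathcal M_p$ is the intersection of $p$ matroids $\mathcal M_1,\dots,\mathcal M_p$ on $V$ (a ''$p$-matroid''); a set is feasible if it lies in $\mathcal M$; the rank is $r=\max_{S\in\mathcal M}|S|$. $d\ge 0$ is an integer and $D\subseteq V$ is a deletion set with $|D|\le d$, fixed in advance and independent of the algorithm's random bits (static adversary). Weights. Items receive a weight $w(v)\ge 0$ when processed, as specified below; for a set $S$, $w(S)=\sum_{u\in S}w(u)$ (with $w(\emptyset)=0$). Exchange$(v,I)$: for each $j\in[p]$ with $I\cup\{v\}\notin\mathcal M_j$, let $u_j\in\arg\min\{w(u): u\in I,\ (I\cup\{v\})\setminus\{u\}\in\mathcal M_j\}$; return the set $\{u_j\}$ of these items (empty if $I\cup\{v\}\in\mathcal M$). Phase A (streaming, parameters $\varepsilon,\alpha>0$): initialize $I=\emptyset$, $C=\emptyset$. For each arriving item $v'$ of $V$ in stream order: (1) $C\gets C\cup\{v'\}$; (2) $C\gets\{v\in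 C: f(v\mid I)\ge (1+\alpha)\,w(\mathrm{Exchange}(v,I))\}$; (3) if $|C|\ge d/\varepsilon$, sample one item $v\in C$ at random with probability proportional to $1/f(v\mid I)$, set $w(v)=f(v\mid I)$, and set $I\gets (I\cup\{v\})\setminus \mathrm{Exchange}(v,I)$. At the end output $S_1:=I$ and the buffer $C$. The coreset is $R=S_1\cup C$. Phase B (after deletions, parameter $\alpha$): start with $I=S_1$. For each $v\in C\setminus D$: set $w(v)=f(v\mid I)$, $S=\mathrm{Exchange}(v,I)$, and if $w(v)\ge(1+\alpha)w(S)$ set $I\gets(I\cup\{v\})\setminus S$. Let $S_2$ be the final $I$; output $\mathrm{ALG}=S_2\setminus D$. *)

From HB Require Import structures.
From mathcomp Require Import all_boot all_order all_algebra.
Set Implicit Arguments. Unset Strict Implicit. Unset Printing Implicit Defensive.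
Import Order.TTheory GRing.Theory Num.Theory.
Local Open Scope ring_scope.

Section Defs.
Variables (R : realFieldType) (T : finType).

Definition marg (f : {set T} -> R) (v : T) (X : {set T}) : R := f (v |: X) - f X.

Definition nonneg_fun (f : {set T} -> R) := forall A, 0 <= f A.
Definition monotone_fun (f : {set T} -> R) :=
  forall A B : {set T}, A \subset B -> f A <= f B.
Definition submodular_fun (f : {set T} -> R) :=
  forall (X Y : {set T}) (v : T), X \subset Y -> v \notin Y -> marg f v Y <= marg f v X.

Definition is_matroid (Ind : {set T} -> bool) : Prop :=
  [/\ Ind set0,
      (forall A B : {set T}, A \subset B -> Ind B -> Ind A) &
      (forall A B : {set T}, Ind A -> Ind B -> (#|A| < #|B|)%N ->
          exists2 x, x \in B :\: A & Ind (x |: A))].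

Definition wsum (w : T -> R) (S : {set T}) : R := \sum_(u in S) w u.

Definition wupd (w : T -> R) (v : T) (a : R) : T -> R :=
  fun x => if x == v then a else w x.

Definition exch_cands (Ind : {set T} -> bool) (v : T) (I : {set T}) : {set T} :=
  [set u in I | Ind ((v |: I) :\ u)].
Definition argmin_set (w : T -> R) (A : {set T}) : {set T} :=
  [set u in A | [forall u' in A, w u <= w u']].

Variables (f : {set T} -> R) (p : nat) (M : 'I_p -> {set T} -> bool)
          (tb : {set T} -> T) (alpha eps : R) (d : nat).

(** Exchange(v, I); ties in the argmin are broken by the rule [tb] *)
Definition Exchange (w : T -> R) (v : T) (I : {set T}) : {set T} :=
  [set tb (argmin_set w (exch_cands (M j) v I)) | j : 'I_p & ~~ M j (v |: I)].

(** algorithm state: tentative solution I, buffer C, weights w,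
    and K = all items ever added to I *)
Record state := State { sI : {set T}; sC : {set T}; sw : T -> R; sK : {set T} }.

Definition init_state : state := State set0 set0 (fun _ => 0) set0.

(** sampling probability of v in C, proportional to 1/f(v|I)
    (limit convention: if some items have zero marginal, uniform among them) *)
Definition samp_prob (I C : {set T}) (v : T) : R :=
  let Z := [set u in C | marg f u I == 0] in
  if Z != set0 then (if v \in Z then (#|Z|%:R)^-1 else 0)
  else (marg f v I)^-1 / \sum_(u in C) (marg f u I)^-1.

Definition filterC (v' : T) (st : state) : state :=
  State (sI st)
        [set v in v' |: sC st |
          (1 + alpha) * wsum (sw st) (Exchange (sw st) v (sI st)) <= marg f v (sI st)]
        (sw st) (sK st).

Definition addA (st : state) (v : T) : state :=
  let w' := wupd (sw st) v (marg f v (sI st)) in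
  State ((v |: sI st) :\: Exchange w' v (sI st)) (sC st :\ v) w' (v |: sK st).

(** Phase A as a finite probability distribution (list of (probability, outcome)) *)
Fixpoint phaseA (s : seq T) (st : state) : seq (R * state) :=
  match s with
  | [::] => [:: (1, st)]
  | v' :: s' =>
      let st1 := filterC v' st in
      if (sC st1 != set0) && (d%:R / eps <= #|sC st1|%:R) then
        flatten [seq [seq (samp_prob (sI st1) (sC st1) v * q.1, q.2)
                     | q <- phaseA s' (addA st1 v)] | v <- enum (sC st1)]
      else phaseA s' st1
  end.

Definition stepB (st : state) (v : T) : state :=
  let w' := wupd (sw st) v (marg f v (sI st)) in
  let S := Exchange w' v (sI st) in
  if (1 + alpha) * wsum w' S <= w' v
  then State ((v |: sI st) :\: S) (sC st) w' (v |: sK st)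
  else State (sI st) (sC st) w' (sK st).

Definition phaseB (s : seq T) (D : {set T}) (st : state) : state :=
  foldl stepB st [seq v <- s | v \in sC st :\: D].

End Defs.

Definition expect (R : realFieldType) (A : Type) (mu : seq (R * A)) (g : A -> R) : R :=
  \sum_(q <- mu) q.1 * g q.2.

From Pilot Require Import Defs.
From HB Require Import structures.
From mathcomp Require Import all_boot all_order all_algebra.
From mathcomp Require Import ring.
Set Implicit Arguments. Unset Strict Implicit. Unset Printing Implicit Defensive.
Import Order.TTheory GRing.Theory Num.Theory.
Local Open Scope ring_scope.

(* Track the potential  Phi(st) = eps * w(K) - w(K ∩ D)  of an
   algorithm state, where K is the set of items ever added.  Initially Phi = 0.
   - Phase A: a sampled item v enters K with weight f(v | I), changing Phi by
     (eps - [v ∈ D]) * f(v | I).  Since v is drawn with probability proportional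
     to 1/f(v | I) from a buffer of size at least d/eps, the expected change is
     proportional to eps|C| - |C ∩ D| >= 0; hence E[Phi] never decreases
     (lemma [phaseA_potential]).
   - Phase B only adds items of C \ D, which are new to K; the weights of the
     old items of K are untouched and all weights are nonnegative, so Phi does
     not decrease on any run (lemma [phaseB_potential]).
   Thus E[Phi(final)] >= 0, and since w(K ∩ D) = w(K) - w(K \ D) this is
   exactly  E[w(K \ D)] >= (1 - eps) E[w(K)]. *)

Lemma expect_mixture (R : realFieldType) (I A : Type) (es : seq I) (P : I -> R)
    (L : I -> seq (R * A)) (g : A -> R) :
  expect (flatten [seq [seq (P v * q.1, q.2) | q <- L v] | v <- es]) g =
  \sum_(v <- es) P v * expect (L v) g.
Proof.
rewrite /expect big_flatten /= big_map; apply: eq_bigr => v _.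
by rewrite big_map mulr_sumr; apply: eq_bigr => q _ /=; rewrite mulrA.
Qed.

Section Weights.
Variables (R : realFieldType) (T : finType).
Implicit Types (w : T -> R) (X Y : {set T}).

Lemma wupd_eq w v a : wupd w v a v = a.
Proof. by rewrite /wupd eqxx. Qed.

Lemma wupd_neq w v a x : x != v -> wupd w v a x = w x.
Proof. by move=> /negbTE xv; rewrite /wupd xv. Qed.

Lemma wsum_upd_out w v a X : v \notin X -> wsum (wupd w v a) X = wsum w X.
Proof.
move=> vX; apply: eq_bigr => x xX; apply: wupd_neq.
by apply: contraNneq vX => <-.
Qed.

Lemma wsum_setU1 w v X : v \notin X -> wsum w (v |: X) = w v + wsum w X.
Proof. exact: big_setU1. Qed.

Lemma wsum_setID w X Y : wsum w X = wsum w (X :&: Y) + wsum w (X :\: Y).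
Proof. exact: big_setID. Qed.

Lemma eq_wsum w w' X : {in X, w =1 w'} -> wsum w X = wsum w' X.
Proof. exact: eq_bigr. Qed.

Lemma wsum_subset w X Y : (forall x, 0 <= w x) -> X \subset Y -> wsum w X <= wsum w Y.
Proof.
move=> w_ge0 XY; rewrite [leRHS](wsum_setID w Y X) (setIidPr XY) lerDl.
exact: sumr_ge0.
Qed.

End Weights.

Section Algorithm.
Variables (R : realFieldType) (T : finType) (f : {set T} -> R) (p : nat)
  (M : 'I_p -> {set T} -> bool) (tb : {set T} -> T) (d : nat) (D : {set T})
  (eps alpha : R).
Hypothesis f_mono : monotone_fun f.
Hypothesis D_small : (#|D| <= d)%N.
Hypothesis eps_gt0 : 0 < eps.

Lemma marg_ge0 v X : 0 <= marg f v X.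
Proof. by rewrite /marg subr_ge0; apply: f_mono; apply: subsetUr. Qed.

Definition potential (st : state R T) : R :=
  eps * wsum (sw st) (sK st) - wsum (sw st) (sK st :&: D).

Lemma samp_prob_ge0 I C v : 0 <= samp_prob f I C v.
Proof.
rewrite /samp_prob /=; case: ifP => _; first by case: ifP; rewrite ?invr_ge0.
rewrite divr_ge0 ?invr_ge0 ?marg_ge0 //.
by apply: sumr_ge0 => u _; rewrite invr_ge0 marg_ge0.
Qed.

Lemma samp_prob_sum1 I C : C != set0 -> \sum_(v in C) samp_prob f I C v = 1.
Proof.
move=> C_n0; rewrite /samp_prob /=.
set Z := [set u in C | marg f u I == 0].
have [Z_n0 | Z0] := boolP (Z != set0).
  rewrite -big_mkcondr /= (eq_bigl (fun u => u \in Z)); last first.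
    by move=> u; rewrite inE andbA andbb.
  by rewrite sumr_const -[_ *+ _]mulr_natr mulVf // pnatr_eq0 -lt0n card_gt0.
rewrite -mulr_suml divff //; move/negPn/eqP: Z0 => Z0.
case/set0Pn: C_n0 => x xC; rewrite (bigD1 x) //= lt0r_neq0 // ltr_pwDl //.
  rewrite invr_gt0 lt0r marg_ge0 andbT; apply/eqP => mx0.
  have : x \in Z by rewrite inE xC mx0 eqxx.
  by rewrite Z0 in_set0.
by apply: sumr_ge0 => u _; rewrite invr_ge0 marg_ge0.
Qed.

Lemma deleted_fraction (C : {set T}) :
  d%:R / eps <= #|C|%:R -> #|C :&: D|%:R <= eps * #|C|%:R.
Proof.
move=> C_big; have CD_d : (#|C :&: D| <= d)%N.
  by apply: leq_trans D_small; apply/subset_leq_card/subsetIr.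
apply: le_trans (_ : d%:R <= _); first by rewrite ler_nat.
by rewrite mulrC -ler_pdivrMr.
Qed.

(* Items with zero marginal gain contribute nothing; otherwise the
   expectation is (eps |C| - |C ∩ D|) divided by the normalizing constant. *)
Lemma sampling_drift_ge0 I C : C != set0 -> d%:R / eps <= #|C|%:R ->
  0 <= \sum_(v in C) samp_prob f I C v * ((eps - (v \in D)%:R) * marg f v I).
Proof.
move=> C_n0 C_big; rewrite /samp_prob /=.
set Z := [set u in C | marg f u I == 0].
have [Z_n0 | /negPn/eqP Z0] := boolP (Z != set0).
  apply: sumr_ge0 => v _; case: ifP => [vZ | _]; last by rewrite mul0r.
  by move: vZ; rewrite inE => /andP[_ /eqP ->]; rewrite !mulr0.
have marg_gt0 v : v \in C -> 0 < marg f v I.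
  move=> vC; rewrite lt0r marg_ge0 andbT; apply/eqP => mv0.
  have : v \in Z by rewrite inE vC mv0 eqxx.
  by rewrite Z0 in_set0.
set S := \sum_(u in C) (marg f u I)^-1.
rewrite (eq_bigr (fun v => (eps - (v \in D)%:R) / S)); last first.
  move=> v vC; have mv_n0 := lt0r_neq0 (marg_gt0 v vC).
  by rewrite mulrC -!mulrA mulVKf.
rewrite -mulr_suml; apply: divr_ge0; last first.
  by apply: sumr_ge0 => u _; rewrite invr_ge0 marg_ge0.
rewrite sumrB sumr_const subr_ge0 -[_ *+ _]mulr_natr.
have -> : \sum_(v in C) ((v \in D)%:R : R) = #|C :&: D|%:R.
  rewrite (eq_bigr (fun v => if v \in D then 1 else 0)) => [|v _]; last first.
    by case: (v \in D).
  rewrite -big_mkcondr /= (eq_bigl (mem (C :&: D))) ?sumr_const // => v.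
  by rewrite !inE.
exact: deleted_fraction.
Qed.

Lemma potentialE st :
  potential st = wsum (sw st) (sK st :\: D) - (1 - eps) * wsum (sw st) (sK st).
Proof. by rewrite /potential (wsum_setID _ (sK st) D); ring. Qed.

Lemma potential_init : potential (init_state R T) = 0.
Proof. by rewrite /potential /wsum /= set0I !big_set0 mulr0 subr0. Qed.

(* It guarantees that a newly added item is new to K and carries no old weight. *)
Definition phaseA_inv (s : seq T) (st : state R T) : Prop :=
  [/\ [disjoint sK st & sC st],
      (forall x, x \in s -> (x \notin sK st) && (x \notin sC st)) &
      (forall x, 0 <= sw st x)].

Lemma phaseA_inv_init s : phaseA_inv s (init_state R T).
Proof. by split=> [|x _|x] //=; rewrite ?in_set0 // -setI_eq0 setI0. Qed.

Lemma filterC_inv v' s st : v' \notin s -> phaseA_inv (v' :: s) st ->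
  phaseA_inv s (filterC f M tb alpha v' st).
Proof.
move=> v's [KC_dis fresh w_ge0]; split=> //=.
- rewrite -setI_eq0; apply/eqP/setP => x; rewrite !inE.
  apply/negP => /and3P[xK /predU1P[xv | xC] _].
    by have := fresh v'; rewrite inE eqxx -xv xK => /(_ isT).
  by move: KC_dis; rewrite -setI_eq0 => /eqP/setP/(_ x); rewrite !inE xK xC.
- move=> x xs; have /andP[-> xC] : (x \notin sK st) && (x \notin sC st).
    by apply: fresh; rewrite inE xs orbT.
  rewrite !inE negb_and negb_or xC andbT; apply/orP; left.
  by apply: contraNneq v's => <-.
Qed.

Lemma addA_inv s st v : phaseA_inv s st -> v \in sC st ->
  phaseA_inv s (Defs.addA f M tb st v).
Proof.
move=> [KC_dis fresh w_ge0] vC; split=> /=.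
- rewrite -setI_eq0; apply/eqP/setP => x; rewrite !inE.
  apply/negP => /and3P[/predU1P[-> | xK] xv xC]; first by rewrite eqxx in xv.
  by move: KC_dis; rewrite -setI_eq0 => /eqP/setP/(_ x); rewrite !inE xK xC.
- move=> x xs; have /andP[xK xC] := fresh x xs.
  have xv : x != v by apply: contraNneq xC => ->.
  by rewrite !inE negb_or xv xK xC.
- by move=> x; rewrite /wupd; case: eqP => _; rewrite ?marg_ge0.
Qed.

Lemma addA_potential s st v : phaseA_inv s st -> v \in sC st ->
  potential (Defs.addA f M tb st v) =
  potential st + (eps - (v \in D)%:R) * marg f v (sI st).
Proof.
move=> [KC_dis _ _] vC; have vK : v \notin sK st.
  by apply: contraTN vC => vK; rewrite (disjointFr KC_dis).
have vKD : v \notin sK st :&: D by rewrite inE negb_and vK.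
rewrite /potential /= wsum_setU1 // wupd_eq wsum_upd_out // setIUl.
case vD: (v \in D).
- rewrite (setIidPl _) ?sub1set // wsum_setU1 // wupd_eq wsum_upd_out // /=; ring.
- rewrite (_ : [set v] :&: D = set0) ?set0U; last first.
    by apply/setP => x; rewrite !inE; case: eqP => // ->; rewrite vD.
  by rewrite wsum_upd_out // /=; ring.
Qed.

Lemma phaseA_potential (F : state R T -> R) :
  (forall st, phaseA_inv [::] st -> potential st <= F st) ->
  forall s st, uniq s -> phaseA_inv s st ->
  potential st <= expect (phaseA f M tb alpha eps d s st) F.
Proof.
move=> F_final; elim=> [|v' s IH] st s_uniq st_inv /=.
  by rewrite /expect big_seq1 mul1r; apply: F_final.
case/andP: s_uniq => v's s_uniq; have := filterC_inv v's st_inv.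
set st1 := filterC _ _ _ _ _ _ => st1_inv.
have -> : potential st = potential st1 by [].
case: ifP => [/andP[C_n0 C_big] | _]; last exact: IH.
rewrite expect_mixture big_enum /=.
apply: le_trans (_ : \sum_(v in sC st1) samp_prob f (sI st1) (sC st1) v *
    potential (Defs.addA f M tb st1 v) <= _); last first.
  apply: ler_sum => v vC; rewrite ler_wpM2l ?samp_prob_ge0 //.
  by apply: IH => //; apply: addA_inv.
under eq_bigr => v vC do rewrite (addA_potential st1_inv vC) mulrDr.
rewrite big_split /= -mulr_suml samp_prob_sum1 // mul1r lerDl.
exact: sampling_drift_ge0.
Qed.

Lemma stepB_spec st v :
  let st' := stepB f M tb alpha st v in
  [/\ sw st' = wupd (sw st) v (marg f v (sI st)),
      sK st \subset sK st' & sK st' \subset v |: sK st].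
Proof. by rewrite /stepB; case: ifP => _; split; rewrite /= ?subsetUr. Qed.

Lemma foldB_spec l st :
  let st' := foldl (stepB f M tb alpha) st l in
  [/\ {in [predC l], sw st' =1 sw st},
      sK st \subset sK st',
      {subset sK st' <= [predU sK st & l]} &
      ((forall x, 0 <= sw st x) -> forall x, 0 <= sw st' x)].
Proof.
elim: l st => [|v l IH] st /=; first by split=> // x xK; rewrite inE xK.
have [w_st' K_grow K_new] := stepB_spec st v.
have [w_out K_sub K_in w_ge0] := IH (stepB f M tb alpha st v).
split.
- move=> x; rewrite !inE negb_or => /andP[xv xl].
  by rewrite w_out ?inE // w_st' wupd_neq.
- exact: subset_trans K_grow K_sub.
- move=> x /K_in; rewrite !inE => /orP[/(subsetP K_new) | xl]; last by rewrite xl !orbT.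
  by rewrite !inE => /orP[-> | ->]; rewrite ?orbT.
- move=> st_ge0; apply: w_ge0 => x; rewrite w_st' /wupd.
  by case: eqP => _; rewrite ?marg_ge0.
Qed.

(* Phase B never decreases the potential: it only adds items outside D, which
   are new to K, without touching the weights of the items already in K. *)
Lemma phaseB_potential s st : phaseA_inv [::] st ->
  potential st <= potential (phaseB f M tb alpha s D st).
Proof.
move=> [KC_dis _ w_ge0]; rewrite /phaseB.
set l := [seq v <- s | v \in sC st :\: D].
have l_CD x : x \in l -> (x \in sC st) && (x \notin D).
  by rewrite mem_filter !inE => /andP[/andP[-> ->] _].
have l_notK x : x \in sK st -> x \notin l.
  by move=> xK; apply: contraTN xK => /l_CD/andP[xC _]; rewrite (disjointFl KC_dis).
have [w_out K_sub K_in w'_ge0] := foldB_spec l st.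
set st' := foldl _ st l in w_out K_sub K_in w'_ge0 *.
have KD_same : sK st' :&: D = sK st :&: D.
  apply/setP => x; rewrite !inE; apply/andP/andP => -[xK xD]; split=> //.
    by case/K_in/orP: xK => // /l_CD; rewrite xD andbF.
  exact: (subsetP K_sub).
rewrite /potential KD_same (@eq_wsum _ _ (sw st') (sw st) (sK st :&: D)) => [|x];
  last first.
  by rewrite inE => /andP[xK _]; rewrite w_out // inE l_notK.
rewrite lerD2r; apply: ler_wpM2l; first exact: ltW.
rewrite (@eq_wsum _ _ (sw st) (sw st') (sK st)) => [|x xK]; last first.
  by rewrite w_out // inE l_notK.
exact: wsum_subset (w'_ge0 w_ge0) K_sub.
Qed.

End Algorithm.

Theorem mainTheorem4 (R : realFieldType) (T : finType) (s : seq T)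
    (f : {set T} -> R) (p : nat) (M : 'I_p -> {set T} -> bool)
    (tb : {set T} -> T) (d : nat) (D : {set T}) (eps alpha : R) :
  uniq s -> (forall v : T, v \in s) ->
  f set0 = 0 -> nonneg_fun f -> monotone_fun f -> submodular_fun f ->
  (0 < p)%N -> (forall j : 'I_p, is_matroid (M j)) ->
  (forall A : {set T}, A != set0 -> tb A \in A) ->
  (#|D| <= d)%N -> 0 < eps -> 0 < alpha ->
  let out := phaseA f M tb alpha eps d s (init_state R T) in
  let final := fun st => phaseB f M tb alpha s D st in
  (1 - eps) * expect out (fun st => wsum (sw (final st)) (sK (final st)))
  <= expect out (fun st => wsum (sw (final st)) (sK (final st) :\: D)).
Proof.
move=> s_uniq _ _ _ f_mono _ _ _ _ D_small eps_gt0 _; cbv zeta.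
set out := phaseA _ _ _ _ _ _ _ _; pose final := phaseB f M tb alpha s D.
pose Phi := potential D eps.
have Phi_final : 0 <= expect out (fun st => Phi (final st)).
  rewrite -(potential_init D eps); apply: phaseA_potential => //.
    by move=> st st_inv; apply: phaseB_potential.
  exact: phaseA_inv_init.
rewrite -subr_ge0 (_ : _ - _ = expect out (fun st => Phi (final st))) //.
by rewrite /expect mulr_sumr -sumrB; apply: eq_bigr => q _; rewrite /Phi potentialE; ring.
Qed.
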